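(* Let $\mathbf{v}_1,\ldots,\mathbf{v}_k$ be orthogonal unit vectors in $\mathbb{R}^k$, let $F:\mathbb{R}^{kn}\to\mathbb{R}$ be \[ F(\mathbf{w}_1,\ldots,\mathbf{w}_n)=\mathbb{E}_{\mathbf{x}\sim\mathcal{N}(\mathbf{0},I_k)}\left[\frac{1}{2}\left(\sum_{i=1}^{n}[\mathbf{w}_i^\top\mathbf{x}]_+-\sum_{i=1}^{k}[\mathbf{v}_i^\top\mathbf{x}]_+\right)^2\right], \] and let $\mathbf{w}=(\mathbf{w}_1,\ldots,\mathbf{w}_n)\in\mathbb{R}^{kn}$ and $\alpha>0$ be such that $F$ is thrice differentiable on an open set containing the closed ball of radius $\alpha$ centered at $\mathbf{w}$. For a unit vector $\mathbf{u}\in\mathbb{R}^{kn}$ and $t\in(0,\alpha]$ let $R_{\mathbf{w},\mathbf{u},t}$ be the number with $F(\mathbf{w}+t\mathbf{u})=F(\mathbf{w})+t\nabla F(\mathbf{w})^\top\mathbf{u}+\tfrac{1}{2}t^2\mathbf{u}^\top\nabla^2F(\mathbf{w})\mathbf{u}+\tfrac{1}{6}t^3R_{\mathbf{w},\mathbf{u},t}$. Assume that for some $\epsilon,B>0$, $\|\nabla F(\mathbf{w})\|\le\epsilon$ and $\sup_{t\in(0,\alpha],\|\mathbf{u}\|=1}|R_{\mathbf{w},\mathbf{u},t}|\le B$; that the smallest eigenvalue $\lambda_{\min}$ of $\nabla^2F(\mathbf{w})$ is positive; that $9\lambda_{\min}^2-25B\epsilon\ge0$; and that $r:=\frac{3\lambda_{\min}-\sqrt{9\lambda_{\min}^2-25B\epsilon}}{2B}$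 satisfies $r<\alpha$ and $r<\min_i\|\mathbf{w}_i\|$. If moreover \[ F(\mathbf{w})>r^2\left(\frac{1}{2}+n(n-1)\left(\frac{\max_i\|\mathbf{w}_i\|+r}{2\pi(\min_i\|\mathbf{w}_i\|-r)}+\frac{1}{2}\right)+\frac{nk\max_i\|\mathbf{v}_i\|}{2\pi(\min_i\|\mathbf{w}_i\|-r)}\right)+r\epsilon, \] then $F$ has a local minimum $\mathbf{w}^*$ with $\|\mathbf{w}^*-\mathbf{w}\|\le r$ which is not a global minimum (i.e. $F(\mathbf{w}^* )>\inf F=0$).
   Context: $[z]_+=\max\{0,z\}$. A local minimum of $F$ is a point $\mathbf{w}^*$ with $F(\mathbf{w}^* )\le F(\mathbf{w}')$ for all $\mathbf{w}'$ in some open neighborhood of $\mathbf{w}^*$. Norms are Euclidean. *)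

From HB Require Import structures.
From mathcomp Require Import all_boot all_order all_algebra.
From mathcomp Require Import all_classical all_reals all_analysis.
Set Implicit Arguments. Unset Strict Implicit. Unset Printing Implicit Defensive.
Import Order.TTheory GRing.Theory Num.Theory.
Import numFieldNormedType.Exports.
Local Open Scope ring_scope.
Local Open Scope classical_set_scope.

Section Defs.
Variable R : realType.

Definition relu (z : R) : R := Num.max 0 z.

Definition dotv m (u x : 'rV[R]_m) : R := \sum_(a < m) u 0 a * x 0 a.
Definition enorm m (u : 'rV[R]_m) : R := Num.sqrt (\sum_(a < m) u 0 a ^+ 2).

(* E_{x ~ N(0, I_m)} [g x], as the iterated integral against the standard
   one-dimensional Gaussian density in each coordinate (Lebesgue integral). *)
Fixpoint gauss_exp (m : nat) : ('rV[R]_m -> R) -> R :=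
  match m return ('rV[R]_m -> R) -> R with
  | 0 => fun g => g 0
  | m'.+1 => fun g =>
      (\int[lebesgue_measure]_(x in setT)
         (normal_pdf 0 1 x * gauss_exp (fun y : 'rV[R]_m' => g (row_mx (const_mx x : 'rV[R]_1) y))))%R
  end.

(* w in R^{kn} is a row vector of length n*k; w_i is the i-th block *)
Definition wblock n k (W : 'rV[R]_(n * k)) (i : 'I_n) : 'rV[R]_k :=
  row i (vec_mx W).

Definition Floss k n (v : 'I_k -> 'rV[R]_k) (W : 'rV[R]_(n * k)) : R :=
  gauss_exp (fun x : 'rV[R]_k =>
    2^-1 * (\sum_(i < n) relu (dotv (wblock W i) x)
            - \sum_(i < k) relu (dotv (v i) x)) ^+ 2).

Definition ebasis N (a : 'I_N) : 'rV[R]_N := delta_mx 0 a.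

Definition pderiv N (a : 'I_N) (f : 'rV[R]_N -> R) : 'rV[R]_N -> R :=
  fun y => derive f y (ebasis a).

Definition thrice_diff_at N (f : 'rV[R]_N -> R) (y : 'rV[R]_N) : Prop :=
  [/\ differentiable f y,
      (forall a, differentiable (pderiv a f) y) &
      (forall a b, differentiable (pderiv a (pderiv b f)) y)].

Definition gradient N (f : 'rV[R]_N -> R) (y : 'rV[R]_N) : 'rV[R]_N :=
  \row_a pderiv a f y.

Definition hessian N (f : 'rV[R]_N -> R) (y : 'rV[R]_N) : 'M[R]_N :=
  \matrix_(a, b) pderiv a (pderiv b f) y.

Definition min_eigenvalue N (A : 'M[R]_N) (lam : R) : Prop :=
  eigenvalue A lam /\ forall mu, eigenvalue A mu -> lam <= mu.

Definition remainder N (f : 'rV[R]_N -> R) (w u : 'rV[R]_N) (t : R) : R :=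
  6 / t ^+ 3 * (f (w + t *: u) - f w - t * dotv (gradient f w) u
                - 2^-1 * t ^+ 2 * (u *m hessian f w *m u^T) 0 0).

End Defs.

From HB Require Import structures.
From mathcomp Require Import all_boot all_order all_algebra.
From mathcomp Require Import all_classical all_reals all_analysis.
From mathcomp Require Import ring lra.
Import Order.TTheory GRing.Theory Num.Theory.
Import numFieldNormedType.Exports.
Local Open Scope ring_scope.
Local Open Scope classical_set_scope.

(* The third-order expansion, |grad f(w)| <= eps, |R| <= B and
   u' Hess u >= lam on unit vectors (the Hessian is symmetric by Schwarz's theorem, so
   its smallest eigenvalue is the minimum of its quadratic form on the sphere) give
     f(w + t u) >= f(w) - t eps + t^2 lam / 2 - t^3 B / 6      for 0 < t <= alpha.
   For t <= r the right-hand side is at least f(w) - t eps, and at t = r it exceeds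
   f(w).  Hence the minimum of f over the closed ball of radius r around w is attained
   in the open ball, where it is a local minimum, with value at least f(w) - r eps;
   the hypothesis on f(w) makes that value positive. *)

Set Implicit Arguments. Unset Strict Implicit.

Section EuclideanNorm.
Variables (R : realType) (N : nat).
Implicit Types u v w : 'rV[R]_N.

Lemma dotvC u v : dotv u v = dotv v u.
Proof. by apply: eq_bigr => a _; rewrite mulrC. Qed.

Lemma dotvDl u v w : dotv (u + v) w = dotv u w + dotv v w.
Proof. by rewrite /dotv -big_split; apply: eq_bigr => a _; rewrite mxE mulrDl. Qed.

Lemma dotvZl (c : R) u w : dotv (c *: u) w = c * dotv u w.
Proof. by rewrite /dotv mulr_sumr; apply: eq_bigr => a _; rewrite mxE mulrA. Qed.

Lemma dotvDr u v w : dotv w (u + v) = dotv w u + dotv w v.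
Proof. by rewrite dotvC dotvDl !(dotvC w). Qed.

Lemma dotvZr (c : R) u w : dotv w (c *: u) = c * dotv w u.
Proof. by rewrite dotvC dotvZl dotvC. Qed.

Lemma dotv_ebasis u (j : 'I_N) : dotv u (ebasis R j) = u 0 j.
Proof.
rewrite /dotv (bigD1 j) //= big1 ?addr0; first by rewrite mxE !eqxx mulr1.
by move=> i /negbTE ij; rewrite mxE ij andbF mulr0.
Qed.

Lemma dotvv_ge0 u : 0 <= dotv u u.
Proof. by apply: sumr_ge0 => a _; rewrite -expr2 sqr_ge0. Qed.

Lemma dotvv_eq0 u : dotv u u = 0 -> u = 0.
Proof.
move=> /eqP; rewrite /dotv psumr_eq0 => [/allP uu0|a _]; last by rewrite -expr2 sqr_ge0.
apply/rowP => a; apply/eqP; rewrite mxE -sqrf_eq0 expr2.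
by apply: uu0; rewrite mem_index_enum.
Qed.

Lemma enorm_ge0 u : 0 <= enorm u.
Proof. exact: sqrtr_ge0. Qed.

Lemma enorm_sqr u : enorm u ^+ 2 = dotv u u.
Proof.
rewrite /enorm sqr_sqrtr; last by apply: sumr_ge0 => a _; rewrite sqr_ge0.
by apply: eq_bigr => a _; rewrite expr2.
Qed.

Lemma enormE u : enorm u = Num.sqrt (dotv u u).
Proof. by rewrite -enorm_sqr sqrtr_sqr ger0_norm ?enorm_ge0. Qed.

Lemma enorm_eq0 u : enorm u = 0 -> u = 0.
Proof. by move=> u0; apply: dotvv_eq0; rewrite -enorm_sqr u0 expr0n. Qed.

Lemma enorm0 : enorm (0 : 'rV[R]_N) = 0.
Proof. by rewrite enormE /dotv big1 ?sqrtr0 // => a _; rewrite mxE mul0r. Qed.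

Lemma enormZ (c : R) u : enorm (c *: u) = `|c| * enorm u.
Proof. by rewrite !enormE dotvZl dotvZr mulrA -expr2 sqrtrM ?sqr_ge0 // sqrtr_sqr. Qed.

Lemma enorm_polar u : u != 0 -> exists2 e, enorm e = 1 & u = enorm u *: e.
Proof.
move=> u0; have nu0 : enorm u != 0 by apply: contra_neq u0; apply: enorm_eq0.
exists ((enorm u)^-1 *: u); last by rewrite scalerA mulfV // scale1r.
by rewrite enormZ ger0_norm ?invr_ge0 ?enorm_ge0 // mulVf.
Qed.

Lemma normr_dotv_le u v : `|dotv u v| <= enorm u * enorm v.
Proof.
have [->|u0] := eqVneq u 0.
  by rewrite /dotv big1 ?normr0 ?mulr_ge0 ?enorm_ge0 // => a _; rewrite mxE mul0r.
have [->|v0] := eqVneq v 0.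
  by rewrite /dotv big1 ?normr0 ?mulr_ge0 ?enorm_ge0 // => a _; rewrite mxE mulr0.
have unit_le (e f : 'rV[R]_N) : enorm e = 1 -> enorm f = 1 -> `|dotv e f| <= 1.
  (* |e -+ f|^2 = 2 -+ 2 <e, f> >= 0 *)
  move=> e1 f1; have := dotvv_ge0 (e + f); have := dotvv_ge0 (e - f).
  rewrite -scaleN1r !(dotvDl, dotvDr, dotvZl, dotvZr) (dotvC f e) -!enorm_sqr e1 f1.
  by rewrite ler_norml => *; apply/andP; split; lra.
have [e e1 ue] := enorm_polar u0; have [f f1 vf] := enorm_polar v0.
rewrite [in leLHS]ue [in leLHS]vf dotvZl dotvZr !normrM !(ger0_norm (enorm_ge0 _)).
by rewrite mulrA ler_piMr ?mulr_ge0 ?enorm_ge0 ?unit_le.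
Qed.

Lemma ler_enormD u v : enorm (u + v) <= enorm u + enorm v.
Proof.
rewrite -(ler_pXn2r (_ : (0 < 2)%N)) ?nnegrE ?addr_ge0 ?enorm_ge0 //.
rewrite enorm_sqr !(dotvDl, dotvDr) -!enorm_sqr (dotvC v u).
have := le_trans (ler_norm _) (normr_dotv_le u v); nra.
Qed.

Lemma normr_coord_le_enorm u a : `|u 0 a| <= enorm u.
Proof.
rewrite -(ler_pXn2r (_ : (0 < 2)%N)) ?nnegrE ?enorm_ge0 // enorm_sqr real_normK ?num_real //.
rewrite /dotv (bigD1 a) //= expr2 lerDl; apply: sumr_ge0 => i _.
by rewrite -expr2 sqr_ge0.
Qed.

Lemma mx_norm_le_enorm u : `|u| <= enorm u.
Proof.
rewrite [leLHS]/Num.norm /= mx_normrE; apply: bigmax_le; first exact: enorm_ge0.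
by move=> [i j] _ /=; rewrite (ord1 i); exact: normr_coord_le_enorm.
Qed.

End EuclideanNorm.

Lemma continuous_sum (R : realType) (T : topologicalType) (I : Type) (s : seq I)
    (F : I -> T -> R) :
  (forall i, continuous (F i)) -> continuous (fun x => \sum_(i <- s) F i x).
Proof.
move=> Fc; elim: s => [|i s IH].
  by under eq_fun do rewrite big_nil; exact: cst_continuous.
under eq_fun do rewrite big_cons.
by move=> x; apply: continuousD; [exact: Fc | exact: IH].
Qed.

Section EuclideanTopology.
Variables (R : realType) (N : nat).

Lemma enorm_continuous : continuous (@enorm R N).
Proof.
move=> x; apply: continuous_comp; last exact: sqrt_continuous.
apply: (@continuous_sum _ _ _ _ (fun a (u : 'rV[R]_N) => u 0 a ^+ 2)) => a y.
by rewrite /GRing.exp /=; apply: continuousM; exact: coord_continuous.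
Qed.

Lemma closed_enorm_preimage (W : 'rV[R]_N) (P : set R) :
  closed P -> closed [set y | P (enorm (y - W))].
Proof.
have fc : continuous (fun y : 'rV[R]_N => enorm (y - W)).
  move=> y; apply: continuous_comp; last exact: enorm_continuous.
  by apply: continuousB; [exact: cvg_id | exact: cst_continuous].
exact: (proj1 (continuous_closedP _) fc).
Qed.

Lemma compact_enorm_preimage (W : 'rV[R]_N) (P : set R) (r : R) :
  closed P -> (forall x, P x -> x <= r) -> compact [set y | P (enorm (y - W))].
Proof.
move=> clP Pr; apply: bounded_closed_compact; last exact: closed_enorm_preimage.
apply: filterS (nbhs_pinfty_gt (num_real (r + enorm W))) => M hM y /= Py.
apply: le_trans (mx_norm_le_enorm _) _; apply: ltW; apply: le_lt_trans hM.
by rewrite -{1}(subrK W y) (le_trans (ler_enormD _ _)) // lerD2r Pr.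
Qed.

End EuclideanTopology.

Section Rayleigh.
Variables (R : realType) (N : nat) (H : 'M[R]_N).
Implicit Types u v : 'rV[R]_N.

Definition bform u v := (u *m H *m v^T) 0 0.

Lemma bformE u v : bform u v = dotv (u *m H) v.
Proof. by rewrite /bform /dotv [LHS]mxE; apply: eq_bigr => b _; rewrite [v^T _ _]mxE. Qed.

Lemma bformZ (c : R) u : bform (c *: u) (c *: u) = c ^+ 2 * bform u u.
Proof. by rewrite !bformE -scalemxAl dotvZl dotvZr mulrA -expr2. Qed.

Lemma bform_continuous : continuous (fun u => bform u u).
Proof.
have -> : (fun u => bform u u) = (fun u => \sum_(b < N) (\sum_(a < N) u 0 a * H a b) * u 0 b).
  by apply: funext => u; rewrite bformE; apply: eq_bigr => b _; rewrite mxE.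
apply: (@continuous_sum _ _ _ _ (fun b u => (\sum_(a < N) u 0 a * H a b) * u 0 b)) => b y.
apply: continuousM; last exact: coord_continuous.
apply: (@continuous_sum _ _ _ _ (fun a u => u 0 a * H a b)) => a z.
by apply: continuousM; [exact: coord_continuous | exact: cst_continuous].
Qed.

Lemma bform_min_sphere u : enorm u = 1 ->
  exists2 u0, enorm u0 = 1 & forall v, bform u0 u0 * dotv v v <= bform v v.
Proof.
move=> u1; pose S := [set y : 'rV[R]_N | enorm (y - 0) = 1].
have S0 : S !=set0 by exists u; rewrite /S /= subr0.
have cS : compact S.
  by apply: (@compact_enorm_preimage _ _ 0 _ 1 (@closed_eq R 1)) => x ->.
have cB : {within S, continuous (fun u => bform u u)}.
  by apply: continuous_subspaceT; exact: bform_continuous.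
have [u0 u0S u0min] := EVT_min_rV S0 cS cB.
move: u0S; rewrite inE /S /= subr0 => u01; exists u0 => // v.
have [->|v0] := eqVneq v 0.
  by rewrite -enorm_sqr enorm0 expr0n mulr0 /bform !mul0mx mxE.
have [e e1 ve] := enorm_polar v0.
have eS : e \in S by rewrite inE /S /= subr0.
rewrite ve bformZ -enorm_sqr enormZ e1 mulr1 ger0_norm ?enorm_ge0 //.
by rewrite [leLHS]mulrC ler_wpM2l ?sqr_ge0 // u0min.
Qed.

Lemma quadratic_ge0_lin_coef_eq0 (L K : R) :
  (forall s, 0 <= 2 * s * L + s ^+ 2 * K) -> L = 0.
Proof.
move=> ge0; pose M := `|K| + 1.
have M0 : 0 < M by rewrite ltr_pwDr ?normr_ge0.
have KM : K - 2 * M < 0 by rewrite /M; have := ler_norm K; have := normr_ge0 K; lra.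
have := ge0 (- L / M).
have -> : 2 * (- L / M) * L + (- L / M) ^+ 2 * K = L ^+ 2 * (K - 2 * M) / M ^+ 2.
  by field; rewrite gt_eqF.
rewrite pmulr_lge0 ?invr_gt0 ?exprn_gt0 // => LKM.
have : L ^+ 2 <= 0 by rewrite -(@ler_nM2r _ (K - 2 * M)) // mul0r.
by rewrite real_exprn_even_le0 ?num_real // => /eqP.
Qed.

Hypothesis H_sym : H^T = H.

Lemma bformC u v : bform u v = bform v u.
Proof.
rewrite /bform -[in LHS](trmxK (u *m H *m v^T)) [LHS]mxE.
by rewrite !trmx_mul trmxK H_sym mulmxA.
Qed.

Lemma bform_min_eigenvector m u :
  (forall v, m * dotv v v <= bform v v) -> bform u u = m * dotv u u ->
  u *m H = m *: u.
Proof.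
move=> min_m um.
suff bform_u d : bform u d = m * dotv u d.
  apply/rowP => j; have := bform_u (ebasis R j).
  by rewrite bformE !dotv_ebasis => ->; rewrite mxE.
apply/eqP; rewrite -subr_eq0; apply/eqP.
apply: (@quadratic_ge0_lin_coef_eq0 _ (bform d d - m * dotv d d)) => s.
have := min_m (u + s *: d); rewrite -subr_ge0.
rewrite !bformE !(mulmxDl, dotvDl, dotvDr, dotvZl, dotvZr) -scalemxAl !dotvZl.
rewrite -!bformE (bformC d u) um (dotvC d u).
by congr (0 <= _); ring.
Qed.

Lemma min_eigenvalue_le_bform lam u :
  min_eigenvalue H lam -> enorm u = 1 -> lam <= bform u u.
Proof.
move=> [_ lam_min] u1; have [u0 u01 u0_min] := bform_min_sphere u1.
have dotu0 : dotv u0 u0 = 1 by rewrite -enorm_sqr u01 expr1n.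
have : eigenvalue H (bform u0 u0).
  apply/eigenvalueP; exists u0.
    by apply: bform_min_eigenvector => //; rewrite dotu0 mulr1.
  by apply: contra_eqN u01 => /eqP ->; rewrite enorm0 eq_sym oner_eq0.
move/lam_min/le_trans; apply.
by have := u0_min u; rewrite -enorm_sqr u1 expr1n mulr1.
Qed.

End Rayleigh.

Lemma MVT0 (R : realType) (g dg : R -> R) (s : R) : 0 < s ->
  (forall x, 0 <= x <= s -> is_derive x 1 g (dg x)) ->
  exists2 c, 0 < c < s & g s - g 0 = dg c * s.
Proof.
move=> s0 dg_g.
have dg_open x : x \in `]0, s[%R -> is_derive x 1 g (dg x).
  by rewrite in_itv /= => /andP[x0 xs]; apply: dg_g; rewrite !ltW.
have g_cont : {within `[0, s], continuous g}.
  apply: continuous_in_subspaceT => x; rewrite inE /= in_itv /= => /dg_g [gx _].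
  by apply: differentiable_continuous; apply/derivable1_diffP.
have [c] := MVT s0 dg_open g_cont.
by rewrite in_itv /= subr0 => c0s ->; exists c.
Qed.

Section Schwarz.
Variables (R : realType) (N : nat).
Local Notation e := (@ebasis R N).

Lemma derive_along_line (f : 'rV[R]_N -> R) (P u : 'rV[R]_N) (x0 : R) :
  derivable f (x0 *: u + P) u ->
  is_derive x0 1 (fun x : R => f (x *: u + P)) (derive f (x0 *: u + P) u).
Proof.
move=> df.
have quotE : (fun h : R => h^-1 *: (((fun x => f (x *: u + P)) \o shift x0) (h *: 1)
                                  - f (x0 *: u + P)))
    = (fun h : R => h^-1 *: ((f \o shift (x0 *: u + P)) (h *: u) - f (x0 *: u + P))).
  by apply: funext => h /=; rewrite [h *: 1]mulr1 scalerDl addrA.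
by apply: DeriveDef; rewrite ?/derivable ?/derive quotE.
Qed.

Lemma normr_ebasis_le1 (a : 'I_N) : `|e a| <= 1.
Proof.
rewrite [leLHS]/Num.norm /= mx_normrE; apply: bigmax_le => // -[i j] _ /=.
by rewrite mxE; case: (_ && _); rewrite ?normr1 ?normr0.
Qed.

Variables (f : 'rV[R]_N -> R) (W : 'rV[R]_N) (d : R).
Hypotheses (d_gt0 : 0 < d)
  (f_diff : forall y, `|y - W| < d -> differentiable f y)
  (df_diff : forall a y, `|y - W| < d -> differentiable (pderiv a f) y)
  (d2f_cont : forall a b, {for W, continuous (pderiv a (pderiv b f))}).

Lemma normr_plane_lt (a b : 'I_N) (x y c : R) : `|x| + `|y| < c ->
  `|(y *: e b + (x *: e a + W)) - W| < c.
Proof.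
move=> xyc; rewrite addrA addrK; apply: le_lt_trans xyc.
apply: le_trans (ler_normD _ _) _; rewrite addrC.
by apply: lerD; rewrite normrZ ler_piMr ?normr_ebasis_le1.
Qed.

Definition diff2 (a b : 'I_N) (s : R) :=
  f (s *: e b + (s *: e a + W)) - f (s *: e a + W) - f (s *: e b + W) + f W.

Lemma diff2C a b s : diff2 a b s = diff2 b a s.
Proof. by rewrite /diff2 (addrCA (s *: e b)); congr (_ + _); rewrite addrAC. Qed.

Lemma diff2_MVT (a b : 'I_N) (s : R) : 0 < s -> s + s < d ->
  exists x y, [/\ 0 < x < s, 0 < y < s &
    diff2 a b s = s * s * pderiv b (pderiv a f) (y *: e b + (x *: e a + W))].
Proof.
move=> s0 ssd.
have near_W x y : 0 <= x <= s -> 0 <= y <= s -> `|(y *: e b + (x *: e a + W)) - W| < d.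
  move=> /andP[x0 xs] /andP[y0 ys]; apply: normr_plane_lt.
  by rewrite !ger0_norm //; apply: le_lt_trans ssd; apply: lerD.
have s_in : 0 <= s <= s by rewrite (ltW s0) /=.
have zero_in : (0:R) <= 0 <= s by rewrite (ltW s0) lexx.
pose phi x := f (x *: e a + (s *: e b + W)) - f (x *: e a + W).
pose dphi x := pderiv a f (x *: e a + (s *: e b + W)) - pderiv a f (x *: e a + W).
have [xi /andP[xi0 xis] phiE] : exists2 c, 0 < c < s & phi s - phi 0 = dphi c * s.
  apply: MVT0 => [//|x x_in].
  have := f_diff (near_W _ _ x_in s_in).
  rewrite addrCA => /(diff_derivable (v := e a)) d1.
  have := f_diff (near_W _ _ x_in zero_in).
  rewrite scale0r add0r => /(diff_derivable (v := e a)) d2.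
  exact: is_deriveB (derive_along_line d1) (derive_along_line d2).
pose psi y := pderiv a f (y *: e b + (xi *: e a + W)).
pose dpsi y := pderiv b (pderiv a f) (y *: e b + (xi *: e a + W)).
have [eta /andP[eta0 etas] psiE] : exists2 c, 0 < c < s & psi s - psi 0 = dpsi c * s.
  apply: MVT0 => [//|y y_in].
  have xi_in : 0 <= xi <= s by rewrite !ltW.
  have := @df_diff a _ (near_W _ _ xi_in y_in) => /(diff_derivable (v := e b)) d3.
  exact: derive_along_line d3.
exists xi, eta; split; rewrite ?xi0 ?xis ?eta0 ?etas //.
have -> : diff2 a b s = phi s - phi 0.
  by rewrite /phi /diff2 !scale0r !add0r (addrCA (s *: e a)); ring.
rewrite phiE; have -> : dphi xi = psi s - psi 0.
  by rewrite /dphi /psi scale0r add0r (addrCA (xi *: e a)).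
by rewrite psiE /dpsi; ring.
Qed.

Lemma plane_in_nbhs (A : set 'rV[R]_N) : nbhs W A ->
  exists2 s, 0 < s /\ s + s < d & forall a b x y, 0 < x < s -> 0 < y < s ->
    A (y *: e b + (x *: e a + W)).
Proof.
move=> /nbhs_ballP[del del0 delA].
have m0 : 0 < Num.min del d by rewrite lt_min del0 d_gt0.
have [m_del m_d] : Num.min del d <= del /\ Num.min del d <= d.
  by rewrite !ge_min !lexx orbT.
exists (Num.min del d / 4); first by split; [rewrite divr_gt0 | lra].
move=> a b x y /andP[x0 xs] /andP[y0 ys]; apply: delA.
rewrite -ball_normE /ball_ /= distrC; apply: normr_plane_lt.
by rewrite !gtr0_norm //; lra.
Qed.

Lemma pderivC (a b : 'I_N) :
  pderiv a (pderiv b f) W = pderiv b (pderiv a f) W.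
Proof.
set g1 := pderiv b (pderiv a f); set g2 := pderiv a (pderiv b f).
have [//|neq] := eqVneq (g2 W) (g1 W); exfalso.
set eps := `|g1 W - g2 W| / 2.
have eps0 : 0 < eps by rewrite divr_gt0 // normr_gt0 subr_eq0 eq_sym.
have g1_cont : {for W, continuous g1} := @d2f_cont b a.
have g2_cont : {for W, continuous g2} := @d2f_cont a b.
have near1 : \forall t \near W, `|g1 W - g1 t| < eps.
  by apply: (cvgr_dist_lt _ _ g1_cont _ eps0).
have near2 : \forall t \near W, `|g2 W - g2 t| < eps.
  by apply: (cvgr_dist_lt _ _ g2_cont _ eps0).
have [s [s0 ssd] close] := plane_in_nbhs (filterI near1 near2).
have [x1 [y1 [x1s y1s E1]]] := diff2_MVT a b s0 ssd.
have [x2 [y2 [x2s y2s E2]]] := diff2_MVT b a s0 ssd.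
have ss0 : s * s != 0 by rewrite mulf_neq0 ?gt_eqF.
rewrite diff2C E2 in E1; have {E1}E := mulfI ss0 E1.
have [B1 _] := close a b x1 y1 x1s y1s; have [_ B2] := close b a x2 y2 x2s y2s.
have : `|g1 W - g2 W| < eps + eps.
  rewrite (_ : g1 W - g2 W = (g1 W - g1 (y1 *: e b + (x1 *: e a + W)))
     - (g2 W - g2 (y2 *: e a + (x2 *: e b + W)))).
    exact: le_lt_trans (ler_normB _ _) (ltrD B1 B2).
  by rewrite /g1 /g2 -E opprB addrA subrK.
by rewrite /eps -splitr ltxx.
Qed.

Lemma hessian_sym : (hessian f W)^T = hessian f W.
Proof. by apply/matrixP => a b; rewrite !mxE pderivC. Qed.

End Schwarz.
Lemma thrice_diff_hessian_sym (R : realType) (N : nat) (f : 'rV[R]_N -> R)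
    (W : 'rV[R]_N) (U : set 'rV[R]_N) :
  open U -> U W -> (forall y, U y -> thrice_diff_at f y) -> (hessian f W)^T = hessian f W.
Proof.
move=> U_open UW U_diff.
have /nbhs_ballP[d d0 dU] : nbhs W U by apply: open_nbhs_nbhs; split.
have near_U y : `|y - W| < d -> U y.
  by move=> yW; apply: dU; rewrite -ball_normE /ball_ /= distrC.
have [_ _ d2f] := U_diff W UW.
apply: (hessian_sym d0) => [y /near_U/U_diff[]//|a y /near_U/U_diff[_ + _]//|a b].
exact: differentiable_continuous.
Qed.

(* r is the smaller root of 4 B x^2 - 12 lam x + 25 eps *)
Lemma radius_facts (R : realType) (eps B lam r : R) :
  0 < eps -> 0 < B -> 0 < lam -> 0 <= 9 * lam ^+ 2 - 25 * B * eps ->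
  r = (3 * lam - Num.sqrt (9 * lam ^+ 2 - 25 * B * eps)) / (2 * B) ->
  [/\ 0 < r, B * r <= 3 / 2 * lam & B * r ^+ 2 - 3 * lam * r + 6 * eps < 0].
Proof.
move=> eps0 B0 lam0 disc0 rE; set q := Num.sqrt _ in rE.
have q0 : 0 <= q by apply: sqrtr_ge0.
have q2 : q ^+ 2 = 9 * lam ^+ 2 - 25 * B * eps by rewrite sqr_sqrtr.
have q_lt : q < 3 * lam.
  rewrite -(@ltr_pXn2r _ 2) ?nnegrE //; last by rewrite mulr_ge0 // ltW.
  by rewrite q2; have := mulr_gt0 B0 eps0; lra.
have rB : r * (2 * B) = 3 * lam - q by rewrite rE mulfVK // gt_eqF // mulr_gt0.
split; first by rewrite rE divr_gt0 ?subr_gt0 // mulr_gt0.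
  nra.
rewrite -(pmulr_rlt0 _ (mulr_gt0 (_ : 0 < 4) B0)) //.
have -> : 4 * B * (B * r ^+ 2 - 3 * lam * r + 6 * eps) =
  (r * (2 * B)) ^+ 2 - 6 * lam * (r * (2 * B)) + 24 * B * eps by ring.
rewrite rB; nra.
Qed.

Lemma cubic_minorant_ge (R : realType) (eps B lam r c t : R) :
  0 < B -> B * r <= 3 / 2 * lam -> 0 < t <= r ->
  c - t * eps <= c - t * eps + t ^+ 2 * lam / 2 - t ^+ 3 * B / 6.
Proof.
move=> B0 Br_le /andP[t0 tr]; have tB : t * B <= r * B by rewrite ler_pM2r.
rewrite -subr_ge0.
have -> : c - t * eps + t ^+ 2 * lam / 2 - t ^+ 3 * B / 6 - (c - t * eps) =
  t ^+ 2 * (lam / 2 - t * B / 6) by ring.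
have Br0 := mulr_gt0 B0 (lt_le_trans t0 tr).
by rewrite mulr_ge0 ?sqr_ge0 //; lra.
Qed.

Lemma cubic_minorant_gt (R : realType) (eps B lam r c : R) :
  0 < r -> B * r ^+ 2 - 3 * lam * r + 6 * eps < 0 ->
  c < c - r * eps + r ^+ 2 * lam / 2 - r ^+ 3 * B / 6.
Proof.
move=> r0 r_root.
have : 0 < r / 6 * - (B * r ^+ 2 - 3 * lam * r + 6 * eps).
  by rewrite mulr_gt0 ?divr_gt0 ?oppr_gt0.
lra.
Qed.

Section LocalMinimum.
Variables (R : realType) (N : nat) (f : 'rV[R]_N -> R) (W : 'rV[R]_N).

Lemma taylor3_lower_bound (eps B lam t : R) (u : 'rV[R]_N) :
  0 < t -> enorm u = 1 -> enorm (gradient f W) <= eps ->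
  `|remainder f W u t| <= B -> lam <= bform (hessian f W) u u ->
  f W - t * eps + t ^+ 2 * lam / 2 - t ^+ 3 * B / 6 <= f (W + t *: u).
Proof.
move=> t0 u1 grad_le rem_le lam_le.
have grad_u : - eps <= dotv (gradient f W) u.
  have := le_trans (normr_dotv_le (gradient f W) u); rewrite u1 mulr1.
  by move=> /(_ _ grad_le); rewrite ler_norml => /andP[].
move: rem_le; rewrite /remainder ler_norml => /andP[rem_ge _].
set F0 := f W in rem_ge *; set Ft := f (W + t *: u) in rem_ge *.
set G := dotv _ u in grad_u rem_ge; set Q := (u *m _ *m u^T) 0 0 in rem_ge.
have {}lam_le : lam <= Q by [].
set Y := Ft - F0 - t * G - 2^-1 * t ^+ 2 * Q in rem_ge.
have t3 : 0 < t ^+ 3 / 6 by rewrite divr_gt0 // exprn_gt0.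
have Y_ge : - B * (t ^+ 3 / 6) <= Y.
  have -> : Y = 6 / t ^+ 3 * Y * (t ^+ 3 / 6) by field; rewrite gt_eqF.
  by rewrite ler_pM2r.
have tG : - eps * t <= G * t by rewrite ler_pM2r.
have t2Q : lam * t ^+ 2 <= Q * t ^+ 2 by rewrite ler_pM2r // exprn_gt0.
rewrite /Y in Y_ge; have t3E : t ^+ 3 = t * t ^+ 2 by rewrite exprS.
nra.
Qed.

Lemma local_min_of_ball_min (ws : 'rV[R]_N) (r : R) :
  enorm (ws - W) < r -> (forall y, enorm (y - W) <= r -> f ws <= f y) ->
  exists delta, 0 < delta /\ forall w', enorm (w' - ws) < delta -> f ws <= f w'.
Proof.
move=> ws_lt ws_min; exists (r - enorm (ws - W)); rewrite subr_gt0; split => // w' w'_lt.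
apply: ws_min; have := ler_enormD (w' - ws) (ws - W).
by rewrite addrA subrK; lra.
Qed.

Lemma ball_min_interior (r : R) : 0 < r ->
  {within [set y | enorm (y - W) <= r], continuous f} ->
  (forall u, enorm u = 1 -> f W < f (W + r *: u)) ->
  exists2 ws, enorm (ws - W) < r & forall y, enorm (y - W) <= r -> f ws <= f y.
Proof.
move=> r0 f_cont f_sphere.
have K0 : [set y | enorm (y - W) <= r] !=set0.
  by exists W; rewrite /= subrr enorm0 ltW.
have cK : compact [set y | enorm (y - W) <= r].
  exact: compact_enorm_preimage (@closed_le R r) (fun x xr => xr).
have [ws] := EVT_min_rV K0 cK f_cont; rewrite inE /= => ws_le ws_min.
have {}ws_min y : enorm (y - W) <= r -> f ws <= f y by move=> yr; apply: ws_min; rewrite inE.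
exists ws => //; rewrite lt_neqAle ws_le andbT; apply/eqP => ws_r.
have : ws - W != 0.
  by apply/eqP => wsW0; move: ws_r; rewrite wsW0 enorm0 => /esym/eqP; rewrite gt_eqF.
move=> /enorm_polar[u u1]; rewrite ws_r => wsWE.
have wsE : ws = W + r *: u by rewrite -wsWE addrC subrK.
have := ws_min W; rewrite subrr enorm0 ltW // => /(_ isT).
by have := f_sphere u u1; rewrite -wsE; lra.
Qed.

Lemma ball_lower_bound (eps r : R) : 0 <= eps ->
  (forall t u, 0 < t <= r -> enorm u = 1 -> f W - t * eps <= f (W + t *: u)) ->
  forall y, enorm (y - W) <= r -> f W - r * eps <= f y.
Proof.
move=> eps0 f_ge y yr; have r0 : 0 <= r := le_trans (enorm_ge0 _) yr.
have [/eqP|yW] := eqVneq (y - W) 0.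
  by rewrite subr_eq0 => /eqP ->; have := mulr_ge0 r0 eps0; lra.
have [u u1 yWE] := enorm_polar yW.
have t_in : 0 < enorm (y - W) <= r.
  by rewrite yr andbT lt0r enorm_ge0 andbT; apply: contra_neq yW; apply: enorm_eq0.
have := f_ge _ _ t_in u1; rewrite -yWE (addrC W) subrK.
have : enorm (y - W) * eps <= r * eps by rewrite ler_wpM2r.
lra.
Qed.

End LocalMinimum.

Theorem local_min_near_approx_critical (R : realType) (N : nat) (f : 'rV[R]_N -> R)
    (W : 'rV[R]_N) (alpha eps B lam r : R) :
  (exists U : set 'rV[R]_N, open U /\
     [set y | enorm (y - W) <= alpha] `<=` U /\ forall y, U y -> thrice_diff_at f y) ->
  0 < eps -> 0 < B -> 0 < lam -> 0 <= 9 * lam ^+ 2 - 25 * B * eps ->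
  r = (3 * lam - Num.sqrt (9 * lam ^+ 2 - 25 * B * eps)) / (2 * B) -> r < alpha ->
  enorm (gradient f W) <= eps ->
  (forall t u, 0 < t <= alpha -> enorm u = 1 -> `|remainder f W u t| <= B) ->
  min_eigenvalue (hessian f W) lam ->
  exists ws, [/\ enorm (ws - W) <= r,
    exists delta, 0 < delta /\ forall w', enorm (w' - ws) < delta -> f ws <= f w'
    & f W - r * eps <= f ws].
Proof.
move=> [U [U_open [ball_U U_diff]]] eps0 B0 lam0 disc0 rE r_alpha grad_le rem_le lam_min.
have [r0 Br_le r_root] := radius_facts eps0 B0 lam0 disc0 rE.
have ball_r_U y : enorm (y - W) <= r -> U y.
  by move=> yr; apply: ball_U; rewrite /= (le_trans yr) ?ltW.
have UW : U W by apply: ball_r_U; rewrite subrr enorm0 ltW.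
have H_sym := thrice_diff_hessian_sym U_open UW U_diff.
have minorant (t : R) (u : 'rV[R]_N) : 0 < t <= r -> enorm u = 1 ->
    f W - t * eps + t ^+ 2 * lam / 2 - t ^+ 3 * B / 6 <= f (W + t *: u).
  move=> /andP[t0 tr] u1; apply: taylor3_lower_bound => //.
    by apply: rem_le => //; rewrite t0 (le_trans tr) ?ltW.
  exact: (min_eigenvalue_le_bform (H := hessian f W) H_sym lam_min u1).
have f_cont : {within [set y | enorm (y - W) <= r], continuous f}.
  apply: continuous_in_subspaceT => y; rewrite inE /= => /ball_r_U/U_diff[df _ _].
  exact: differentiable_continuous.
have f_sphere (u : 'rV[R]_N) : enorm u = 1 -> f W < f (W + r *: u).
  move=> u1; apply: lt_le_trans (minorant _ _ _ u1); last by rewrite r0 lexx.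
  exact: cubic_minorant_gt.
have [ws ws_lt ws_min] := ball_min_interior r0 f_cont f_sphere.
exists ws; split; [exact: ltW | exact: local_min_of_ball_min ws_lt ws_min |].
apply: ball_lower_bound (ltW eps0) _ _ (ltW ws_lt) => t u t_in u1.
exact: le_trans (cubic_minorant_ge _ _ B0 Br_le t_in) (minorant _ _ t_in u1).
Qed.

Unset Implicit Arguments. Set Strict Implicit.

Theorem lemma2 (R : realType) (k n : nat) (v : 'I_k -> 'rV[R]_k)
  (W : 'rV[R]_(n * k)) (alpha eps B lam wmin wmax vmax : R) :
  (forall i j, dotv (v i) (v j) = (i == j)%:R) ->
  0 < alpha ->
  (exists U : set 'rV[R]_(n * k), open U /\
     [set y | enorm (y - W) <= alpha] `<=` U /\
     forall y, U y -> thrice_diff_at (Floss v) y) ->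
  0 < eps -> 0 < B ->
  enorm (gradient (Floss v) W) <= eps ->
  (forall (t : R) (u : 'rV[R]_(n * k)), 0 < t <= alpha -> enorm u = 1 ->
     `|remainder (Floss v) W u t| <= B) ->
  min_eigenvalue (hessian (Floss v) W) lam ->
  0 < lam ->
  0 <= 9 * lam ^+ 2 - 25 * B * eps ->
  (forall i, wmin <= enorm (wblock W i)) -> (exists i, enorm (wblock W i) = wmin) ->
  (forall i, enorm (wblock W i) <= wmax) -> (exists i, enorm (wblock W i) = wmax) ->
  (forall i, enorm (v i) <= vmax) -> (exists i, enorm (v i) = vmax) ->
  let r := (3 * lam - Num.sqrt (9 * lam ^+ 2 - 25 * B * eps)) / (2 * B) in
  r < alpha ->
  r < wmin ->
  Floss v W > r ^+ 2 * (2^-1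
       + (n * (n - 1))%:R * ((wmax + r) / (2 * pi * (wmin - r)) + 2^-1)
       + (n * k)%:R * vmax / (2 * pi * (wmin - r))) + r * eps ->
  exists wstar : 'rV[R]_(n * k),
    enorm (wstar - W) <= r /\
    (exists delta : R, 0 < delta /\
       forall w' : 'rV[R]_(n * k), enorm (w' - wstar) < delta ->
         Floss v wstar <= Floss v w') /\
    0 < Floss v wstar.
Proof.
move=> _ _ U_diff eps0 B0 grad_le rem_le lam_min lam0 disc0 _ _ _ [i wmax_eq] _ [j vmax_eq]
  r r_alpha r_wmin F_big.
have [ws [ws_r ws_locmin ws_ge]] := local_min_near_approx_critical U_diff eps0 B0 lam0
  disc0 (erefl r) r_alpha grad_le rem_le lam_min.
exists ws; split=> //; split=> //.
have r_ge0 : 0 <= r := le_trans (enorm_ge0 _) ws_r.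
have den_gt0 : 0 < 2 * pi * (wmin - r) by rewrite !mulr_gt0 ?pi_gt0 ?subr_gt0.
have wmax_ge0 : 0 <= wmax by rewrite -wmax_eq enorm_ge0.
have vmax_ge0 : 0 <= vmax by rewrite -vmax_eq enorm_ge0.
set X := (X in r ^+ 2 * X) in F_big.
have half_ge0 : 0 <= 2^-1 :> R by rewrite invr_ge0.
have X_ge0 : 0 <= X.
  apply: addr_ge0; first apply: addr_ge0 => //.
    exact: mulr_ge0 (ler0n _ _) (addr_ge0 (divr_ge0 (addr_ge0 wmax_ge0 r_ge0)
      (ltW den_gt0)) half_ge0).
  exact: divr_ge0 (mulr_ge0 (ler0n _ _) vmax_ge0) (ltW den_gt0).
have := mulr_ge0 (sqr_ge0 r) X_ge0; lra.
Qed.
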